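(* Let $r\ge1$ and $f:\mathbb{Z}\to\mathbb{C}$ be such that $f\circ\Delta^{(r)}\in L^1(\mathbb{P})$. Then \[\lim_{N\to\infty}\frac1N\sum_{n<N}f(\Delta^{(r)}(n))=\int_{\mathbb{X}}f(\Delta^{(r)}(x))\,d\mathbb{P}(x).\]
   Context: Fix an integer $b\ge2$. $\mathbb{X}:=\{0,\dots,b-1\}^{\mathbb{N}}$ is the space of $b$-adic integers ($x_0$ the units digit) with addition with carries extending addition on $\mathbb{N}$ ($\mathbb{N}$ embedded via base-$b$ digits); $\mathbb{P}$ is its normalized Haar measure (digits i.i.d. uniform). For $k\in\mathbb{N}$, $s_k(x):=x_0+\dots+x_k$, $\Delta_k^{(r)}(x):=s_k(x+r)-s_k(x)$, and $\Delta^{(r)}(x):=\lim_k\Delta_k^{(r)}(x)$, defined for all but finitely many $x$. For $n\in\mathbb{N}$, $\Delta^{(r)}(n)=s(n+r)-s(n)$, where $s$ is the base-$b$ sum-of-digits function. *)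

From HB Require Import structures.
From mathcomp Require Import all_boot all_order all_algebra.
From mathcomp Require Import all_classical all_reals all_analysis.
From mathcomp Require Import complex.

Set Implicit Arguments.
Unset Strict Implicit.
Unset Printing Implicit Defensive.

Import Order.TTheory GRing.Theory Num.Theory.
Import numFieldNormedType.Exports.

Local Open Scope classical_set_scope.
Local Open Scope ring_scope.

(* A point x is its digit sequence (x 0 = units digit).  The ambient type is
   nat -> nat; the Haar measure below is concentrated on the digit sequences
   with all digits in {0,..,b-1}, i.e. on {0,..,b-1}^N. *)
Definition digseq := nat -> nat.

Definition cyl (k : nat) (d : nat -> nat) : set digseq :=
  [set x | forall i, (i < k)%N -> x i = d i].

Definition cylinders : set (set digseq) :=
  [set A | exists k d, A = cyl k d].

Definition bX := g_sigma_algebraType cylinders.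

Definition is_haar (R : realType) (b : nat)
    (P : probability bX R) : Prop :=
  forall (k : nat) (d : nat -> nat), (forall i, (i < k)%N -> (d i < b)%N) ->
    P (cyl k d) = ((b%:R ^- k : R)%:E).

Definition trunc (b : nat) (x : digseq) (k : nat) : nat :=
  (\sum_(i < k.+1) x i * b ^ i)%N.

(* the b-adic integer x + r (addition with carries): its k-th digit is the
   k-th digit of (x mod b^(k+1)) + r *)
Definition addr_b (b r : nat) (x : digseq) : digseq :=
  fun k => (((trunc b x k + r) %/ b ^ k) %% b)%N.

Definition embed (b n : nat) : digseq := fun i => ((n %/ b ^ i) %% b)%N.

Definition s_k (x : digseq) (k : nat) : nat := (\sum_(i < k.+1) x i)%N.

Definition Delta_k (b r : nat) (x : digseq) (k : nat) : int :=
  (s_k (addr_b b r x) k)%:Z - (s_k x k)%:Z.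

(* Delta^{(r)}(x) = lim_k Delta_k^{(r)}(x) (an eventually constant integer
   sequence when the limit exists); junk value 0 where it does not exist
   (finitely many x, a P-null set). *)
Definition Delta (b r : nat) (x : digseq) : int :=
  xget 0%Z [set z : int | exists K, forall k, (K <= k)%N -> Delta_k b r x k = z].

Definition Cintegrable (R : realType) (P : probability bX R)
    (g : bX -> R[i]) : Prop :=
  P.-integrable setT (fun x => (complex.Re (g x))%:E) /\
  P.-integrable setT (fun x => (complex.Im (g x))%:E).

Definition Cintegral (R : realType) (P : probability bX R)
    (g : bX -> R[i]) : R[i] :=
  Complex (Rintegral P setT (fun x => complex.Re (g x)))
          (Rintegral P setT (fun x => complex.Im (g x))).

Definition Ccvg (R : realType) (u : nat -> R[i]) (l : R[i]) : Prop :=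
  (fun n => complex.Re (u n)) @ \oo --> complex.Re l /\
  (fun n => complex.Im (u n)) @ \oo --> complex.Im l.

(* Whether the b-adic addition of r to x carries past digit k depends only on
   whether (x mod b^(k+1)) + r < b^(k+1), and when it does not, Delta^(r)(x) is a
   function of the first k+1 digits.  Accordingly f(Delta^(r)) splits into a head,
   constant on the cylinders of length k+1 and hence b^(k+1)-periodic along the
   integers, plus a tail supported where the carry passes digit k.  The Cesaro
   means of the head converge to its integral by periodicity.  On the set where no
   carry passes digit J >= k, the tail is again a function of the first J+1 digits,
   so choosing b^J <= N + r < b^(J+1) bounds the Cesaro mean of |tail| up to N by
   2b times its integral.  That integral tends to 0 by dominated convergence,
   because the carry propagates forever only on a set of measure at most
   r b^-(k+1) for every k. *)

From HB Require Import structures.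
From mathcomp Require Import all_boot all_order all_algebra.
From mathcomp Require Import all_classical all_reals all_analysis.
From mathcomp Require Import measurable_realfun.
From mathcomp Require Import complex.
From mathcomp Require Import zify ring lra.

Set Implicit Arguments.
Unset Strict Implicit.
Unset Printing Implicit Defensive.

Import Order.TTheory GRing.Theory Num.Theory.
Import numFieldNormedType.Exports.

Local Open Scope classical_set_scope.
Local Open Scope ring_scope.

Definition no_carry (b r : nat) (x : digseq) (k : nat) : bool :=
  (trunc b x k + r < b ^ k.+1)%N.

Section Carries.
Variables (b r : nat).
Local Open Scope nat_scope.

Lemma trunc_recr x k : trunc b x k.+1 = trunc b x k + x k.+1 * b ^ k.+1.
Proof. by rewrite /trunc big_ord_recr. Qed.

Lemma eq_trunc x y k :
  (forall i, i <= k -> x i = y i) -> trunc b x k = trunc b y k.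
Proof. by move=> xy; apply: eq_bigr => i _; rewrite xy // -ltnS. Qed.

Lemma embedE n i : embed b n i = n %% b ^ i.+1 %/ b ^ i.
Proof. by rewrite /embed modn_divl expnS. Qed.

Lemma embed_modn n K i : i < K -> embed b (n %% b ^ K) i = embed b n i.
Proof. by move=> iK; rewrite !embedE modn_dvdm // dvdn_exp2l. Qed.

Lemma trunc_embed n k : trunc b (embed b n) k = n %% b ^ k.+1.
Proof.
elim: k => [|k IHk]; first by rewrite /trunc big_ord1 muln1 embedE divn1.
rewrite trunc_recr IHk embedE -(modn_dvdm n (dvdn_exp2l b (leqnSn k.+1))).
by rewrite [in RHS](divn_eq (n %% b ^ k.+2) (b ^ k.+1)) addnC.
Qed.

Lemma no_carryS x k : x k.+1 < b -> no_carry b r x k -> no_carry b r x k.+1.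
Proof. by rewrite /no_carry trunc_recr [b ^ k.+2]expnS; nia. Qed.

Lemma no_carry_le x k j : (forall i, x i < b) ->
  k <= j -> no_carry b r x k -> no_carry b r x j.
Proof.
move=> x_lt /subnK <-; elim: (j - k) => // m IHm nc.
by rewrite addSn no_carryS // IHm.
Qed.

Lemma eq_Delta_k x y k :
  (forall i, i <= k -> x i = y i) -> Delta_k b r x k = Delta_k b r y k.
Proof.
move=> xy; rewrite /Delta_k /s_k; congr (Posz _ - Posz _)%R.
  apply: eq_bigr => i _; rewrite /addr_b (eq_trunc (x := x) (y := y)) // => l li.
  by rewrite xy // (leq_trans li) // -ltnS.
by apply: eq_bigr => i _; rewrite xy // -ltnS.
Qed.

Hypothesis b_gt0 : 0 < b.

Lemma embed_lt n i : embed b n i < b.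
Proof. by rewrite ltn_pmod. Qed.

Lemma addr_b_no_carry x k :
  no_carry b r x k -> addr_b b r x k.+1 = x k.+1 %% b.
Proof.
rewrite /no_carry /addr_b trunc_recr => nc.
by rewrite addnAC addnC divnMDl ?expn_gt0 ?b_gt0 // divn_small // addn0.
Qed.

Section Bounded.
Variable x : digseq.
Hypothesis x_lt : forall i, x i < b.

Lemma Delta_k_no_carry k j :
  k <= j -> no_carry b r x k -> Delta_k b r x j = Delta_k b r x k.
Proof.
move=> /subnK <-; elim: (j - k) => // m IHm nc.
rewrite addSn -{}IHm // /Delta_k /s_k !big_ord_recr /=.
rewrite addr_b_no_carry ?modn_small //; last exact: no_carry_le x_lt (leq_addl m k) nc.
by rewrite [in LHS]PoszD [X in (_ - X)%R]PoszD; ring.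
Qed.

Lemma Delta_no_carry k : no_carry b r x k -> Delta b r x = Delta_k b r x k.
Proof.
move=> nc; rewrite /Delta.
have ex : exists z, exists K, forall j, K <= j -> Delta_k b r x j = z.
  by exists (Delta_k b r x k), k => j kj; exact: Delta_k_no_carry.
have [K HK] := xgetPex 0%Z ex.
by rewrite -(HK (maxn k K)) ?leq_maxr // (Delta_k_no_carry (leq_maxl k K) nc).
Qed.

End Bounded.

Lemma eq_Delta_no_carry x y k :
  (forall i, x i < b) -> (forall i, y i < b) ->
  (forall i, i <= k -> x i = y i) -> no_carry b r x k ->
  Delta b r x = Delta b r y.
Proof.
move=> xb yb xy nc; rewrite (Delta_no_carry xb nc) (Delta_no_carry yb (k := k)).
  exact: eq_Delta_k.
by rewrite /no_carry -(eq_trunc xy).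
Qed.

End Carries.

Lemma cvg_of_approx (R : realType) (u : R ^nat) (l : R) :
  (forall e, 0 < e -> exists v lv, [/\ v @ \oo --> lv, `|l - lv| <= e &
                                     \forall n \near \oo, `|u n - v n| <= e]) ->
  u @ \oo --> l.
Proof.
move=> approx; apply/cvgrPdist_le => e e0.
have e30 : 0 < e / 3 by rewrite divr_gt0.
have [v [lv [/cvgrPdist_le /(_ _ e30) v_lv l_lv u_v]]] := approx _ e30.
near=> n.
have vn : `|lv - v n| <= e / 3 by near: n.
have un : `|u n - v n| <= e / 3 by near: n.
have := ler_normD (l - lv) (lv - v n); rewrite addrA subrK => l_vn.
have := ler_normD (l - v n) (v n - u n); rewrite addrA subrK (distrC (v n)).
lra.
Unshelve. all: by end_near.
Qed.

Section PeriodicAverage.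
Variables (R : realType) (w : nat -> R) (M : nat).
Hypothesis M_gt0 : (0 < M)%N.

Let S := \sum_(0 <= n < M) w n.
Let A := \sum_(0 <= n < M) `|w n|.

Lemma sum_periodic q s :
  \sum_(0 <= n < q * M + s) w (n %% M) = q%:R * S + \sum_(0 <= n < s) w (n %% M).
Proof.
elim: q => [|q IHq]; first by rewrite mul0n add0n mul0r add0r.
rewrite mulSn -addnA (big_cat_nat (leq0n M) (leq_addr _ M)) /=.
have -> : \sum_(M <= n < M + (q * M + s)) w (n %% M) =
          \sum_(0 <= n < q * M + s) w (n %% M).
  by rewrite -{1}[M]add0n big_addn addKn; apply: eq_bigr => n _; rewrite modnDr.
have -> : \sum_(0 <= n < M) w (n %% M) = S.
  by rewrite /S !big_nat; apply: eq_bigr => n /andP[_ nM]; rewrite modn_small.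
by rewrite IHq mulrSr; ring.
Qed.

Lemma sum_periodic_dev N :
  `|M%:R * \sum_(0 <= n < N) w (n %% M) - N%:R * S| <= 2 * M%:R * A.
Proof.
rewrite [X in \sum_(0 <= n < X) _](divn_eq N M) sum_periodic.
rewrite [in N%:R](divn_eq N M) natrD natrM.
have sM : (N %% M <= M)%N by rewrite ltnW // ltn_mod.
set s := (N %% M)%N in sM *; set q := (N %/ M)%N.
have -> : \sum_(0 <= n < s) w (n %% M) = \sum_(0 <= n < s) w n.
  rewrite !big_nat; apply: eq_bigr => n /andP[_ ns].
  by rewrite modn_small // (leq_trans ns).
have wA : `|\sum_(0 <= n < s) w n| <= A.
  apply: le_trans (ler_norm_sum _ _ _) _.
  by rewrite /A (big_cat_nat (leq0n s) sM) /= lerDl sumr_ge0.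
have SA : `|S| <= A by exact: ler_norm_sum.
have A0 : 0 <= A by rewrite sumr_ge0.
have -> : M%:R * (q%:R * S + \sum_(0 <= n < s) w n) - (q%:R * M%:R + s%:R) * S
          = M%:R * \sum_(0 <= n < s) w n - s%:R * S by ring.
apply: le_trans (ler_normB _ _) _; rewrite !normrM !normr_nat.
have sMR : (s%:R : R) <= M%:R by rewrite ler_nat.
apply: le_trans (lerD (ler_wpM2l (ler0n _ _) wA) (ler_wpM2l (ler0n _ _) SA)) _.
have := ler_wpM2r A0 sMR; lra.
Qed.

Lemma cvg_avg_periodic :
  (fun N => N%:R^-1 * \sum_(n < N) w (n %% M)) @ \oo --> M%:R^-1 * \sum_(n < M) w n.
Proof.
apply/cvgrPdist_le => e e0; near=> N.
have N0 : (0 < N)%N by near: N; exact: nbhs_infty_gt.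
have NA : 2 * A / e < N%:R by near: N; exact: nbhs_infty_gtr.
have [NR MR] : (0 : R) < N%:R /\ (0 : R) < M%:R by rewrite !ltr0n.
have dev := sum_periodic_dev N; rewrite /S !big_mkord in dev.
set T := \sum_(n < N) w (n %% M) in dev *; set S' := \sum_(n < M) w n in dev *.
have -> : M%:R^-1 * S' - N%:R^-1 * T = (N%:R * S' - M%:R * T) / (N%:R * M%:R).
  by field; rewrite !lt0r_neq0.
rewrite normrM normfV (gtr0_norm (mulr_gt0 NR MR)) ler_pdivrMr ?mulr_gt0 // distrC.
apply: le_trans dev _; rewrite ltr_pdivrMr // in NA; nra.
Unshelve. all: by end_near.
Qed.

End PeriodicAverage.

Section Cylinders.
Variables (R : realType) (b : nat) (P : probability bX R).
Hypothesis b_gt1 : (1 < b)%N.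
Hypothesis P_haar : is_haar b P.

Let b_gt0 : (0 < b)%N. Proof. exact: ltnW. Qed.

Definition cyl_of k u : set bX := cyl k.+1 (embed b u).

(* The set {0,...,b-1}^N, written as a countable intersection of finite unions
   of cylinders so that it is measurable. *)
Definition Xb : set bX := \bigcap_k \bigcup_(u < (b ^ k.+1)%N) cyl_of k u.

Lemma measurable_cyl_of k u : measurable (cyl_of k u).
Proof. by apply: sub_sigma_algebra; exists k.+1, (embed b u). Qed.

Lemma measure_cyl_of k u : P (cyl_of k u) = (b%:R ^- k.+1)%:E.
Proof. by rewrite /cyl_of P_haar // => i _; exact: embed_lt. Qed.

Lemma cyl_of_trunc {k u x} : cyl_of k u x -> trunc b x k = (u %% b ^ k.+1)%N.
Proof. by move=> ux; rewrite -trunc_embed //; apply: eq_trunc => i ik; apply: ux. Qed.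

Lemma cyl_of_inj {k u v x} : (u < b ^ k.+1)%N -> (v < b ^ k.+1)%N ->
  cyl_of k u x -> cyl_of k v x -> u = v.
Proof.
move=> ub vb /cyl_of_trunc ux /cyl_of_trunc vx.
by rewrite -(modn_small ub) -(modn_small vb) -ux -vx.
Qed.

Lemma measurable_bigcup_cyl_of k n : measurable (\bigcup_(u < n) cyl_of k u).
Proof.
by rewrite bigcup_mkord; apply: bigsetU_measurable => u _; exact: measurable_cyl_of.
Qed.

Lemma measure_bigcup_cyl_of k n : (n <= b ^ k.+1)%N ->
  P (\bigcup_(u < n) cyl_of k u) = (n%:R / b%:R ^+ k.+1)%:E.
Proof.
move=> nb; have tF : trivIset setT (fun i : 'I_n => cyl_of k i).
  move=> i j _ _ [x [ix jx]]; apply: val_inj.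
  exact: cyl_of_inj (leq_trans (ltn_ord i) nb) (leq_trans (ltn_ord j) nb) ix jx.
rewrite bigcup_mkord (measure_bigsetU_ord _ _ (fun i => measurable_cyl_of k i) tF).
rewrite (eq_bigr (fun=> (b%:R ^- k.+1)%:E)) => [|i _]; last exact: measure_cyl_of.
by rewrite sumEFin sumr_const card_ord mulr_natl.
Qed.

Lemma measurable_Xb : measurable Xb.
Proof. by apply: bigcapT_measurable => k; exact: measurable_bigcup_cyl_of. Qed.

Lemma ae_Xb : {ae P, forall x, Xb x}.
Proof.
have nullC k : P (~` \bigcup_(u < (b ^ k.+1)%N) cyl_of k u) = 0%E.
  rewrite (probability_setC _ (measurable_bigcup_cyl_of _ _)).
  rewrite measure_bigcup_cyl_of // natrX divff ?subee //.
  by rewrite expf_neq0 // pnatr_eq0 -lt0n ltnW.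
have null k : P.-negligible (~` \bigcup_(u < (b ^ k.+1)%N) cyl_of k u).
  apply/negligibleP; last exact: nullC.
  exact: measurableC (measurable_bigcup_cyl_of _ _).
apply: negligibleS (negligible_bigcup null) => x /=.
by rewrite -setC_bigcap.
Qed.

Lemma Xb_digit x : Xb x -> forall i, (x i < b)%N.
Proof. by move=> xX i; have [u _ ux] := xX i I; rewrite (ux i (ltnSn i)) embed_lt. Qed.

Lemma Xb_cyl_of k x : Xb x -> exists2 u, (u < b ^ k.+1)%N & cyl_of k u x.
Proof. by move=> /(_ k I) [u]; exists u. Qed.

Lemma cyl_of_embed k n : cyl_of k (n %% b ^ k.+1) (embed b n).
Proof. by move=> i ik; rewrite embed_modn. Qed.

Lemma Xb_embed n : Xb (embed b n).
Proof.
move=> k _; exists (n %% b ^ k.+1)%N; last exact: cyl_of_embed.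
by rewrite /= ltn_mod expn_gt0 b_gt0.
Qed.

Definition cyl_step k (v : nat -> R) (x : bX) : R :=
  \sum_(u < b ^ k.+1) v u * \1_(cyl_of k u) x.

Lemma cyl_stepE k v u x : (u < b ^ k.+1)%N -> cyl_of k u x -> cyl_step k v x = v u.
Proof.
move=> ub ux; rewrite /cyl_step (bigD1 (Ordinal ub)) //= big1 ?addr0.
  by rewrite indicE mem_set // mulr1.
move=> j /eqP ju; rewrite indicE.
case: (boolP (x \in _)) => [/set_mem jx|]; last by rewrite mulr0.
by exfalso; apply/ju/val_inj; exact: cyl_of_inj (ltn_ord j) ub jx ux.
Qed.

Let EFin_cyl_step k v x :
  (cyl_step k v x)%:E = (\sum_(u < b ^ k.+1) (v u)%:E * (\1_(cyl_of k u) x)%:E)%E.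
Proof. by rewrite /cyl_step -sumEFin; apply: eq_bigr => u _; rewrite EFinM. Qed.

Let integrable_indic_cyl_of k (c : R) (u : 'I_(b ^ k.+1)) :
  P.-integrable setT (fun x => (c%:E * (\1_(cyl_of k u) x)%:E)%E).
Proof.
by apply: (integrableZl measurableT); apply: integrable_indic; exact: measurable_cyl_of.
Qed.

Lemma integrable_cyl_step k v : P.-integrable setT (EFin \o cyl_step k v).
Proof.
apply: (eq_integrable measurableT
  (fun x => \sum_(u < b ^ k.+1) (v u)%:E * (\1_(cyl_of k u) x)%:E)%E).
  by move=> x _; rewrite /= EFin_cyl_step.
by apply: (integrable_sum measurableT) => u _; exact: integrable_indic_cyl_of.
Qed.

Lemma Rintegral_cyl_step k v :
  Rintegral P setT (cyl_step k v) = (b ^ k.+1)%:R^-1 * \sum_(u < b ^ k.+1) v u.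
Proof.
rewrite /Rintegral; under eq_integral do rewrite EFin_cyl_step.
rewrite (integral_sum measurableT); last by move=> u; exact: integrable_indic_cyl_of.
rewrite (eq_bigr (fun u : 'I_(b ^ k.+1) => (v u * b%:R ^- k.+1)%:E)) => [|u _].
  by rewrite sumEFin /= mulr_sumr; apply: eq_bigr => u _; rewrite mulrC natrX.
rewrite (integralZl measurableT); last first.
  by apply: integrable_indic; exact: measurable_cyl_of.
rewrite integral_indic //; last exact: measurable_cyl_of.
by rewrite EFinM setIT; congr (_ * _)%E; exact: measure_cyl_of.
Qed.

Lemma Rintegral_Xb (f : bX -> R) : P.-integrable setT (EFin \o f) ->
  Rintegral P setT f = Rintegral P Xb f.
Proof.
move=> fi; have mXbC : measurable (~` Xb) by exact: measurableC measurable_Xb.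
rewrite -(setUv Xb) Rintegral_setU ?setUv //; last 2 first.
- exact: measurable_Xb.
- exact/disj_setPCl.
rewrite /Rintegral [X in _ + fine X]null_set_integral //; first by rewrite addr0.
- by apply: (measurable_funS measurableT) => //; exact: (measurable_int P fi).
- exact: (negligibleP _ mXbC).1 ae_Xb.
Qed.

Section CarrySets.
Variable r : nat.

Definition no_carry_set k : set bX := \bigcup_(u < (b ^ k.+1 - r)%N) cyl_of k u.

Lemma measurable_no_carry_set k : measurable (no_carry_set k).
Proof. exact: measurable_bigcup_cyl_of. Qed.

Lemma no_carry_setE {x} k : Xb x -> no_carry_set k x <-> no_carry b r x k.
Proof.
move=> /(Xb_cyl_of k) [u ub ux]; rewrite /no_carry (cyl_of_trunc ux) modn_small //.
split=> [[v /= vbr vx]|ubr]; last by exists u => //=; lia.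
by rewrite -(cyl_of_inj _ ub vx ux); lia.
Qed.

Lemma no_carry_set_le k j x :
  Xb x -> (k <= j)%N -> no_carry_set k x -> no_carry_set j x.
Proof.
move=> xX kj /(no_carry_setE k xX) nc; apply/(no_carry_setE j xX).
exact: no_carry_le (Xb_digit xX) kj nc.
Qed.

Lemma measure_no_carry_setC k :
  (P (~` no_carry_set k) <= (r%:R / b%:R ^+ k.+1)%:E)%E.
Proof.
rewrite (probability_setC _ (measurable_no_carry_set k)).
rewrite measure_bigcup_cyl_of ?leq_subr // -EFinB lee_fin.
have bk : (0 : R) < b%:R ^+ k.+1 by rewrite exprn_gt0 // ltr0n.
have [rb|br] := leqP r (b ^ k.+1).
  rewrite natrB // natrX mulrBl divff ?gt_eqF //; lra.
rewrite (_ : (b ^ k.+1 - r)%N = 0%N); last by apply/eqP; rewrite subn_eq0 ltnW.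
by rewrite mul0r subr0 ler_pdivlMr // mul1r -natrX ler_nat ltnW.
Qed.

Definition carry_forever : set bX := \bigcap_k ~` no_carry_set k.

Lemma measurable_carry_forever : measurable carry_forever.
Proof.
by apply: bigcapT_measurable => k; exact: measurableC (measurable_no_carry_set k).
Qed.

Lemma measure_carry_forever : P carry_forever = 0%E.
Proof.
apply/eqP; rewrite eq_le measure_ge0 andbT; apply/lee_addgt0Pr => e e0.
rewrite add0e; set K := Num.Def.archi_bound (r%:R / e).
have rK : r%:R / e < K%:R by apply: archi_boundP; rewrite divr_ge0 // ltW.
apply: (@le_trans _ _ (P (~` no_carry_set K))).
  apply: le_measure; rewrite ?inE; first exact: measurable_carry_forever.
    exact: measurableC (measurable_no_carry_set K).
  by move=> x /(_ K I).
apply: le_trans (measure_no_carry_setC K) _.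
have Kb : (K%:R : R) < b%:R ^+ K.+1.
  by rewrite -natrX ltr_nat (ltn_trans (ltnSn K)) // ltn_expl.
have bK : (0 : R) < b%:R ^+ K.+1 by rewrite exprn_gt0 // ltr0n.
rewrite lee_fin ler_pdivrMr // -ler_pdivrMl // mulrC ltW //.
exact: lt_trans rK Kb.
Qed.

Section Average.
Variable h : int -> R.
Hypothesis h_Delta_int : P.-integrable setT (fun x => (h (Delta b r x))%:E).

Let G (x : bX) : R := h (Delta b r x).

Definition head k u : R :=
  if (u + r < b ^ k.+1)%N then h (Delta b r (embed b u)) else 0.

Definition tail k x : R := h (Delta b r x) * \1_(~` no_carry_set k) x.

Lemma Delta_head_tail k u x : Xb x -> (u < b ^ k.+1)%N -> cyl_of k u x ->
  G x = head k u + tail k x.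
Proof.
move=> xX ub ux; have trx := cyl_of_trunc ux; rewrite modn_small // in trx.
rewrite /tail /head indicE in_setC; case: ifPn => ubr.
  have nc : no_carry b r x k by rewrite /no_carry trx.
  rewrite mem_set ?mulr0 ?addr0; last exact/(no_carry_setE k xX).
  by rewrite /G (eq_Delta_no_carry b_gt0 (Xb_digit xX) (embed_lt b_gt0 u) ux nc).
rewrite memNset ?mulr1 ?add0r // => /(no_carry_setE k xX).
by rewrite /no_carry trx (negbTE ubr).
Qed.

Lemma Delta_embed_head_tail k n :
  G (embed b n) = head k (n %% b ^ k.+1) + tail k (embed b n).
Proof.
apply: Delta_head_tail; [exact: Xb_embed | | exact: cyl_of_embed].
by rewrite ltn_mod expn_gt0 b_gt0.
Qed.

Let measurable_G : measurable_fun setT G.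
Proof. by apply/measurable_EFinP; exact: (measurable_int P h_Delta_int). Qed.

Lemma normr_tail_le k x : `|tail k x| <= `|G x|.
Proof.
by rewrite /tail indicE normrM; case: (_ \in _); rewrite ?normr1 ?normr0 ?mulr1 ?mulr0.
Qed.

Lemma integrable_tail k : P.-integrable setT (EFin \o tail k).
Proof.
apply: (le_integrable measurableT _ _ h_Delta_int).
  apply/measurable_EFinP; apply: measurable_funM measurable_G _.
  by apply: measurable_indic; exact: measurableC (measurable_no_carry_set k).
by move=> x _ /=; rewrite lee_fin normr_tail_le.
Qed.

Let integrable_norm_tail k :
  P.-integrable setT (EFin \o (fun x => `|tail k x|)).
Proof. exact: integrable_norm (integrable_tail k). Qed.

Lemma Rintegral_head_tail k : Rintegral P setT G =
  (b ^ k.+1)%:R^-1 * \sum_(u < b ^ k.+1) head k u + Rintegral P setT (tail k).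
Proof.
have int_split : P.-integrable setT (EFin \o (cyl_step k (head k) \+ tail k)).
  apply: (eq_integrable measurableT
    ((EFin \o cyl_step k (head k)) \+ (EFin \o tail k))%E).
    by move=> x _ /=; rewrite EFinD.
  exact: integrableD (integrable_cyl_step k _) (integrable_tail k).
rewrite -Rintegral_cyl_step -RintegralD //; last 2 first.
- exact: integrable_cyl_step.
- exact: integrable_tail.
rewrite (Rintegral_Xb h_Delta_int) (Rintegral_Xb int_split).
apply: eq_Rintegral => x /set_mem xX; have [u ub ux] := Xb_cyl_of k xX.
by rewrite /= (cyl_stepE _ ub ux); exact: Delta_head_tail.
Qed.

Lemma tail_cyl_of k J u x : (k <= J)%N -> Xb x -> cyl_of J u x ->
  (u + r < b ^ J.+1)%N -> tail k x = tail k (embed b u).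
Proof.
move=> kJ xX ux ubr; have trx := cyl_of_trunc ux.
rewrite modn_small ?(leq_ltn_trans (leq_addr r u)) // in trx.
have ncJ : no_carry b r x J by rewrite /no_carry trx.
have trk : trunc b x k = trunc b (embed b u) k.
  by apply: eq_trunc => i ik; apply: ux; rewrite ltnS (leq_trans ik).
rewrite /tail (eq_Delta_no_carry b_gt0 (Xb_digit xX) (embed_lt b_gt0 u) ux ncJ).
rewrite !indicE !in_setC.
suff -> : (x \in no_carry_set k) = (embed b u \in no_carry_set k) by [].
have ncE y : Xb y -> (y \in no_carry_set k) = no_carry b r y k.
  move=> yX; apply/idP/idP => [/set_mem/(no_carry_setE k yX) //|].
  by move/(no_carry_setE k yX)/mem_set.
by rewrite (ncE x xX) (ncE _ (Xb_embed u)) /no_carry trk.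
Qed.

Lemma sum_tail_le_cyl k J N : (k <= J)%N -> (N + r <= b ^ J.+1)%N ->
  \sum_(n < N) `|tail k (embed b n)| <=
  (b ^ J.+1)%:R * Rintegral P setT (fun x => `|tail k x|).
Proof.
move=> kJ NJ; set v := fun u => if (u + r < b ^ J.+1)%N then `|tail k (embed b u)| else 0.
have v_le : Rintegral P setT (cyl_step J v) <= Rintegral P setT (fun x => `|tail k x|).
  rewrite (Rintegral_Xb (integrable_cyl_step J v)).
  rewrite (Rintegral_Xb (integrable_norm_tail k)).
  apply: le_Rintegral measurable_Xb _ _ _.
  - by apply: (integrableS measurableT measurable_Xb) => //; exact: integrable_cyl_step.
  - by apply: (integrableS measurableT measurable_Xb) => //; exact: integrable_norm_tail.
  move=> x xX; have [u ub ux] := Xb_cyl_of J xX.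
  have := cyl_stepE v ub ux; rewrite /cyl_step => ->; rewrite /v; case: ifP => // ubr.
  by rewrite (tail_cyl_of kJ xX ux ubr).
have bJ : (0 : R) < (b ^ J.+1)%:R by rewrite ltr0n expn_gt0 b_gt0.
rewrite Rintegral_cyl_step -(ler_pM2l bJ) mulrA mulfV ?gt_eqF // mul1r in v_le.
apply: le_trans v_le.
have NbJ : (N <= b ^ J.+1)%N by apply: leq_trans NJ; exact: leq_addr.
rewrite -!(big_mkord xpredT) (big_cat_nat (leq0n N) NbJ) /= ler_wpDr ?sumr_ge0 //.
  by move=> u _; rewrite /v; case: ifP.
rewrite big_mkord; apply: ler_sum => u _.
by rewrite /v ifT // (leq_trans _ NJ) // ltn_add2r.
Qed.

Lemma sum_tail_le k N : (0 < N)%N -> (r <= N)%N -> (b ^ k <= N + r)%N ->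
  \sum_(n < N) `|tail k (embed b n)| <=
  2 * b%:R * N%:R * Rintegral P setT (fun x => `|tail k x|).
Proof.
move=> N0 rN bk; set J := trunc_log b (N + r).
have kJ : (k <= J)%N by exact: trunc_log_max.
have bJ : (b ^ J <= N + r)%N by apply: trunc_logP => //; rewrite addn_gt0 N0.
apply: le_trans (sum_tail_le_cyl kJ (ltnW (trunc_log_ltn _ b_gt1))) _.
apply: ler_wpM2r; first by apply: Rintegral_ge0.
have Nr : ((N + r)%:R : R) <= 2 * N%:R.
  by rewrite natrD mulr2n mulrDl mul1r lerD2l ler_nat.
have bJN : ((b ^ J)%:R : R) <= 2 * N%:R by rewrite (le_trans _ Nr) // ler_nat.
by rewrite expnS natrM [2 * _]mulrC -mulrA ler_wpM2l.
Qed.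

Lemma cvg_Rintegral_tail :
  (fun k => Rintegral P setT (fun x => `|tail k x|)) @ \oo --> 0.
Proof.
have ae_carry : {ae P, forall x, ~ carry_forever x}.
  exists carry_forever; split => [||x /= /contrapT //].
  - exact: measurable_carry_forever.
  - exact: measure_carry_forever.
have tail0 : {ae P, forall x, setT x ->
    (fun k => (`|tail k x|)%:E) @ \oo --> (cst 0%E : bX -> \bar R) x}.
  apply: filterS2 ae_Xb ae_carry => x xX /existsNP [k0 /not_implyP [_ /contrapT nck0]] _.
  apply: cvg_near_cst; near=> k.
  have nck : no_carry_set k x.
    by apply: no_carry_set_le xX _ nck0; near: k; exact: nbhs_infty_ge.
  by rewrite /tail indicE in_setC mem_set // mulr0 normr0.
have G_int : P.-integrable setT (EFin \o (fun x => `|G x|)).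
  exact: integrable_norm h_Delta_int.
have tail_le : {ae P, forall x k, setT x -> (`|(`|tail k x|)%:E| <= (`|G x|)%:E)%E}.
  by apply: aeW => x k _; rewrite abse_EFin normr_id lee_fin normr_tail_le.
have [_ _] := @dominated_convergence _ _ _ P setT measurableT
  (fun k => EFin \o (fun x => `|tail k x|)) (cst 0%E) (EFin \o (fun x => `|G x|))
  (fun k => measurable_int P (integrable_norm_tail k)) (measurable_cst _)
  tail0 G_int tail_le.
by rewrite integral0 => /fine_cvgP[].
Unshelve. all: by end_near.
Qed.

Lemma cvg_avg_Delta :
  (fun N => N%:R^-1 * \sum_(n < N) G (embed b n)) @ \oo --> Rintegral P setT G.
Proof.
apply: cvg_of_approx => e e0.
have b2 : (0 : R) < 2 * b%:R by rewrite mulr_gt0 // ltr0n.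
have be0 : 0 < e / (2 * b%:R) by rewrite divr_gt0.
have [k _ /(_ k (leqnn k))] := (cvgrPdist_le _ _).1 cvg_Rintegral_tail _ be0.
set T := Rintegral P setT (fun x => `|tail k x|).
have T0 : 0 <= T by apply: Rintegral_ge0.
rewrite sub0r normrN ger0_norm // => Te.
have Te1 : 2 * b%:R * T <= e by rewrite mulrC -ler_pdivlMr.
exists (fun N => N%:R^-1 * \sum_(n < N) head k (n %% b ^ k.+1)),
       ((b ^ k.+1)%:R^-1 * \sum_(u < b ^ k.+1) head k u); split.
- by apply: cvg_avg_periodic; rewrite expn_gt0 b_gt0.
- rewrite (Rintegral_head_tail k) addrC addKr.
  apply: le_trans (le_normr_Rintegral measurableT (integrable_tail k)) _.
  have b1 : (1 : R) <= b%:R by rewrite ler1n ltnW.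
  rewrite -/T; nra.
near=> N.
have N0 : (0 < N)%N by near: N; exact: nbhs_infty_gt.
have rN : (r <= N)%N by near: N; exact: nbhs_infty_ge.
have bN : (b ^ k <= N)%N by near: N; exact: nbhs_infty_ge.
have NR : (0 : R) < N%:R by rewrite ltr0n.
have -> : \sum_(n < N) G (embed b n) =
    \sum_(n < N) head k (n %% b ^ k.+1) + \sum_(n < N) tail k (embed b n).
  by rewrite -big_split; apply: eq_bigr => n _; exact: Delta_embed_head_tail.
rewrite mulrDr addrC addKr normrM normfV normr_nat mulrC ler_pdivrMr //.
apply: le_trans (ler_norm_sum _ _ _) _.
apply: le_trans (sum_tail_le N0 rN (leq_trans bN (leq_addr r N))) _.
by rewrite -/T mulrAC ler_wpM2r.
Unshelve. all: by end_near.
Qed.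

End Average.

End CarrySets.

End Cylinders.

Lemma Re_avg (R : rcfType) N (F : 'I_N -> R[i]) :
  complex.Re (N%:R^-1 * \sum_(n < N) F n) = N%:R^-1 * \sum_(n < N) complex.Re (F n).
Proof.
rewrite -(rmorph_nat (real_complex R)) -fmorphV.
rewrite -(raddf_sum (@complex.Re R : Rcomplex R -> R)).
by case: (\sum_(n < N) F n) => x y /=; rewrite mul0r subr0.
Qed.

Lemma Im_avg (R : rcfType) N (F : 'I_N -> R[i]) :
  complex.Im (N%:R^-1 * \sum_(n < N) F n) = N%:R^-1 * \sum_(n < N) complex.Im (F n).
Proof.
rewrite -(rmorph_nat (real_complex R)) -fmorphV.
rewrite -(raddf_sum (@complex.Im R : Rcomplex R -> R)).
by case: (\sum_(n < N) F n) => x y /=; rewrite mul0r addr0.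
Qed.

Theorem mainTheorem7 (R : realType) (b : nat) (P : probability bX R)
    (r : nat) (f : int -> R[i]) :
  (2 <= b)%N -> is_haar b P -> (1 <= r)%N ->
  Cintegrable P (fun x => f (Delta b r x)) ->
  Ccvg (fun N : nat => N%:R^-1 * \sum_(n < N) f (Delta b r (embed b n)))
       (Cintegral P (fun x => f (Delta b r x))).
Proof.
move=> b_gt1 P_haar _ [Re_int Im_int]; split.
- under eq_fun do rewrite Re_avg.
  exact: (cvg_avg_Delta b_gt1 P_haar (h := fun z => complex.Re (f z)) Re_int).
- under eq_fun do rewrite Im_avg.
  exact: (cvg_avg_Delta b_gt1 P_haar (h := fun z => complex.Im (f z)) Im_int).
Qed.
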